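(* A frame $L$ is subfit if and only if each $S\in\mathfrak{B}(\mathrm{coS}(L))$ is a meet in $\mathrm{coS}(L)$ of closed sublocales.
   Context: A frame $L$ is subfit if for all $a,b\in L$ with $a\not\le b$ there is $c\in L$ with $a\vee c=1\ne b\vee c$. A sublocale of $L$ is a subset $S\subseteq L$ closed under arbitrary meets and such that $x\to s\in S$ for all $x\in L$, $s\in S$. $\mathrm{coS}(L)$ is the set of all sublocales of $L$ ordered by reverse inclusion; it is a frame, whose meets are the joins of sublocales under inclusion ($\bigwedge S_i=\{\bigwedge M\mid M\subseteq\bigcup S_i\}$). For $a\in L$, the closed sublocale is $\mathfrak{c}(a)=\{x\in L\mid x\ge a\}$. For a frame $M$, $\mathfrak{B}(M)=\{x\in M\mid x=x^{\ast\ast}\}$, where $^\ast$ is pseudocomplement in $M$. *)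

Record frame := Frame {
  car :> Type;
  le : car -> car -> Prop;
  le_refl : forall x, le x x;
  le_trans : forall x y z, le x y -> le y z -> le x z;
  le_antisym : forall x y, le x y -> le y x -> x = y;
  sup : (car -> Prop) -> car;
  sup_ub : forall (S : car -> Prop) x, S x -> le x (sup S);
  sup_least : forall (S : car -> Prop) y, (forall x, S x -> le x y) -> le (sup S) y;
  meet : car -> car -> car;
  meet_lb1 : forall x y, le (meet x y) x;
  meet_lb2 : forall x y, le (meet x y) y;
  meet_glb : forall x y z, le z x -> le z y -> le z (meet x y);
  frame_distr : forall a (S : car -> Prop),
      le (meet a (sup S)) (sup (fun y => exists s, S s /\ y = meet a s))
}.

Section FrameOps.
Variable L : frame.

Definition top : L := sup L (fun _ => True).
Definition join (a b : L) : L := sup L (fun x => x = a \/ x = b).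
Definition inf (M : L -> Prop) : L := sup L (fun y => forall m, M m -> le L y m).
Definition imp (a b : L) : L := sup L (fun y => le L (meet L y a) b).

Definition subfit : Prop :=
  forall a b : L, ~ le L a b -> exists c : L, join a c = top /\ join b c <> top.

Definition sublocale (S : L -> Prop) : Prop :=
  (forall M : L -> Prop, (forall m, M m -> S m) -> S (inf M)) /\
  (forall x s, S s -> S (imp x s)).

Definition closed_sub (a : L) : L -> Prop := fun x => le L a x.

(* Meet in coS(L) (ordered by reverse inclusion) of a family of sublocales:
   the join of the sublocales under inclusion, {/\M | M subset of U S_i}. *)
Definition coS_meet {I : Type} (F : I -> L -> Prop) : L -> Prop :=
  fun x => exists M : L -> Prop, (forall m, M m -> exists i, F i m) /\ x = inf M.

Definition coS_meet2 (S T : L -> Prop) : L -> Prop :=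
  coS_meet (fun b : bool => if b then S else T).

Definition coS_le (S T : L -> Prop) : Prop := forall x, T x -> S x.

Definition coS_is_bot (S : L -> Prop) : Prop := forall x, S x.

Definition coS_pseudocompl (S T : L -> Prop) : Prop :=
  sublocale T /\ coS_is_bot (coS_meet2 S T) /\
  forall U, sublocale U -> coS_is_bot (coS_meet2 S U) -> coS_le U T.

(* S belongs to B(coS(L)): S = S** *)
Definition in_B_coS (S : L -> Prop) : Prop :=
  sublocale S /\ exists T, coS_pseudocompl S T /\ coS_pseudocompl T S.

End FrameOps.

From Stdlib Require Import Classical.

(* Let S = T* in B(coS L).  For y in L let t be the least element of T above y.
   Whenever t ⊔ e = 1, the closed sublocale c(y ⊔ e) meets T only in 1, so it
   lies inside S; and subfitness yields y = t ⊓ ⋀{y ⊔ e | t ⊔ e = 1}.  Hence T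
   together with the closed sublocales inside S covers L, so S = T* is contained
   in (hence equal to) the join of those closed sublocales.
   Conversely, every open sublocale o(a) is complemented by c(a), so it lies in
   B(coS L); writing a ⇨ b in o(a) as a meet of elements of closed sublocales
   c(f i) ⊆ o(a) produces the element required by subfitness when a ≰ b. *)

Section Frame.
Variable L : frame.

Local Infix "≤" := (le L) (at level 70).
Local Infix "⊓" := (meet L) (at level 40, left associativity).
Local Infix "⊔" := (join L) (at level 50, left associativity).
Local Infix "⇨" := (imp L) (at level 60, right associativity).
Local Notation "⊤" := (top L).

Lemma le_top (x : L) : x ≤ ⊤.
Proof. apply sup_ub; exact I. Qed.

Lemma top_le (x : L) : ⊤ ≤ x -> x = ⊤.
Proof. intro H; apply le_antisym; [apply le_top | exact H]. Qed.

Lemma inf_lb (M : L -> Prop) (m : L) : M m -> inf L M ≤ m.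
Proof. intro Mm; apply sup_least; intros y Hy; exact (Hy m Mm). Qed.

Lemma inf_glb (M : L -> Prop) (z : L) : (forall m, M m -> z ≤ m) -> z ≤ inf L M.
Proof. intro H; apply sup_ub; exact H. Qed.

Lemma inf_singleton (m : L) : inf L (fun k => k = m) = m.
Proof.
  apply le_antisym.
  - apply inf_lb; reflexivity.
  - apply inf_glb; intros k ->; apply le_refl.
Qed.

Lemma join_ubl (a b : L) : a ≤ a ⊔ b.
Proof. apply sup_ub; left; reflexivity. Qed.

Lemma join_ubr (a b : L) : b ≤ a ⊔ b.
Proof. apply sup_ub; right; reflexivity. Qed.

Lemma join_lub (a b z : L) : a ≤ z -> b ≤ z -> a ⊔ b ≤ z.
Proof. intros Ha Hb; apply sup_least; intros x [-> | ->]; assumption. Qed.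

Lemma meet_comm_le (a b : L) : a ⊓ b ≤ b ⊓ a.
Proof. apply meet_glb; [apply meet_lb2 | apply meet_lb1]. Qed.

Lemma meet_mono (a a' b b' : L) : a ≤ a' -> b ≤ b' -> a ⊓ b ≤ a' ⊓ b'.
Proof.
  intros Ha Hb; apply meet_glb.
  - apply le_trans with a; [apply meet_lb1 | exact Ha].
  - apply le_trans with b; [apply meet_lb2 | exact Hb].
Qed.

Lemma meet_join_distr (a b c : L) : a ⊓ (b ⊔ c) ≤ a ⊓ b ⊔ a ⊓ c.
Proof.
  eapply le_trans; [apply frame_distr |].
  apply sup_least; intros y [s [[-> | ->] ->]]; [apply join_ubl | apply join_ubr].
Qed.

Lemma imp_meet (a b : L) : (a ⇨ b) ⊓ a ≤ b.
Proof.
  eapply le_trans; [apply meet_comm_le |].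
  eapply le_trans; [apply frame_distr |].
  apply sup_least; intros y [s [Hs ->]].
  eapply le_trans; [apply meet_comm_le | exact Hs].
Qed.

Lemma imp_adj (z a b : L) : z ≤ a ⇨ b <-> z ⊓ a ≤ b.
Proof.
  split; intro H.
  - eapply le_trans; [apply meet_mono; [exact H | apply le_refl] | apply imp_meet].
  - apply sup_ub; exact H.
Qed.

Lemma le_imp_self (a x : L) : x ≤ a ⇨ x.
Proof. apply imp_adj, meet_lb1. Qed.

Lemma imp_mono_r (a b c : L) : b ≤ c -> a ⇨ b ≤ a ⇨ c.
Proof. intro H; apply imp_adj; eapply le_trans; [apply imp_meet | exact H]. Qed.

Lemma imp_comm_le (a x s : L) : a ⇨ x ⇨ s ≤ x ⇨ a ⇨ s.
Proof.
  apply imp_adj, imp_adj.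
  apply le_trans with ((a ⇨ x ⇨ s) ⊓ a ⊓ x).
  - apply meet_glb; [apply meet_glb |].
    + eapply le_trans; apply meet_lb1.
    + apply meet_lb2.
    + eapply le_trans; [apply meet_lb1 | apply meet_lb2].
  - eapply le_trans; [apply meet_mono; [apply imp_meet | apply le_refl] |].
    apply imp_meet.
Qed.

(* The open sublocale o(a) = {a ⇨ x | x ∈ L}, described as the fixpoints of a ⇨ _. *)
Definition open_sub (a : L) : L -> Prop := fun x => a ⇨ x = x.

Lemma open_sub_imp (a x : L) : open_sub a (a ⇨ x).
Proof.
  apply le_antisym; [| apply le_imp_self].
  apply imp_adj.
  apply le_trans with ((a ⇨ a ⇨ x) ⊓ a ⊓ a).
  - apply meet_glb; [apply le_refl | apply meet_lb2].
  - apply imp_adj, imp_meet.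
Qed.

Lemma open_ge_top (a x : L) : open_sub a x -> a ≤ x -> x = ⊤.
Proof.
  intros Hx Hax; apply top_le.
  rewrite <- Hx; apply imp_adj.
  eapply le_trans; [apply meet_lb2 | exact Hax].
Qed.

Lemma open_sub_sublocale (a : L) : sublocale L (open_sub a).
Proof.
  split.
  - intros M HM; apply le_antisym; [| apply le_imp_self].
    apply inf_glb; intros m Mm.
    rewrite <- (HM m Mm); apply imp_mono_r, inf_lb, Mm.
  - intros x s Hs; apply le_antisym; [| apply le_imp_self].
    eapply le_trans; [apply imp_comm_le |].
    rewrite Hs; apply le_refl.
Qed.

Lemma closed_sub_sublocale (a : L) : sublocale L (closed_sub L a).
Proof.
  split.
  - intros M HM; apply inf_glb; exact HM.
  - intros x s Hs; apply imp_adj.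
    eapply le_trans; [apply meet_lb1 | exact Hs].
Qed.

Lemma coS_meet_of_mem {I : Type} (F : I -> L -> Prop) (i : I) (x : L) :
  F i x -> coS_meet L F x.
Proof.
  intro Hx; exists (fun k => k = x); split.
  - intros k ->; exists i; exact Hx.
  - symmetry; apply inf_singleton.
Qed.

Lemma sublocale_coS_meet {I : Type} (F : I -> L -> Prop) :
  (forall i, sublocale L (F i)) -> sublocale L (coS_meet L F).
Proof.
  intro HF; split.
  - intros N HN.
    exists (fun m => exists n Mn, N n /\ (forall k, Mn k -> exists i, F i k) /\
                                  n = inf L Mn /\ Mn m).
    split.
    + intros m [n [Mn [_ [HMn [_ Hm]]]]]; exact (HMn m Hm).
    + apply le_antisym.
      * apply inf_glb; intros m [n [Mn [Nn [_ [-> Hm]]]]].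
        eapply le_trans; [apply inf_lb, Nn | apply inf_lb, Hm].
      * apply inf_glb; intros n Nn.
        destruct (HN n Nn) as [Mn [HMn ->]].
        apply inf_glb; intros k Hk; apply inf_lb.
        exists (inf L Mn), Mn; auto.
  - intros x s [M [HM ->]].
    exists (fun k => exists m, M m /\ k = x ⇨ m); split.
    + intros k [m [Mm ->]].
      destruct (HM m Mm) as [i Hi]; exists i.
      apply (proj2 (HF i)), Hi.
    + apply le_antisym.
      * apply inf_glb; intros k [m [Mm ->]]; apply imp_mono_r, inf_lb, Mm.
      * apply imp_adj, inf_glb; intros m Mm.
        eapply le_trans; [apply meet_mono; [apply inf_lb | apply le_refl] |].
        -- exists m; split; [exact Mm | reflexivity].
        -- apply imp_meet.
Qed.

Lemma coS_meet2E (S T : L -> Prop) (x : L) :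
  coS_meet2 L S T x <->
  exists M : L -> Prop, (forall m, M m -> S m \/ T m) /\ x = inf L M.
Proof.
  split; intros [M [HM Hx]]; exists M; split; try exact Hx; intros m Mm.
  - destruct (HM m Mm) as [[|] Hm]; [left | right]; exact Hm.
  - destruct (HM m Mm) as [Hm | Hm]; [exists true | exists false]; exact Hm.
Qed.

Lemma coS_meet2_comm (S T : L -> Prop) :
  coS_is_bot L (coS_meet2 L S T) -> coS_is_bot L (coS_meet2 L T S).
Proof.
  intros H x.
  destruct (proj1 (coS_meet2E _ _ _) (H x)) as [M [HM Hx]].
  apply coS_meet2E; exists M; split; [| exact Hx].
  intros m Mm; destruct (HM m Mm); tauto.
Qed.

(* If S ∨ U = L in coS(L), the members of S above x can be dropped from any
   meet representing x as soon as they are all equal to ⊤. *)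
Lemma coS_meet2_absorb (S U : L -> Prop) (x : L) :
  sublocale L U -> coS_is_bot L (coS_meet2 L S U) ->
  (forall m, S m -> x ≤ m -> m = ⊤) -> U x.
Proof.
  intros HU Hcov Htop.
  destruct (proj1 (coS_meet2E _ _ _) (Hcov x)) as [M [HM Hx]].
  replace x with (inf L (fun m => M m /\ U m)).
  { apply (proj1 HU); intros m Hm; apply Hm. }
  apply le_antisym.
  - rewrite Hx; apply inf_glb; intros m Mm.
    destruct (HM m Mm) as [Sm | Um].
    + rewrite (Htop m Sm); [apply le_top |].
      rewrite Hx; apply inf_lb, Mm.
    + apply inf_lb; split; assumption.
  - rewrite Hx; apply inf_glb; intros m [Mm _]; apply inf_lb, Mm.
Qed.

Lemma open_closed_cover (a : L) :
  coS_is_bot L (coS_meet2 L (open_sub a) (closed_sub L a)).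
Proof.
  intro x; apply coS_meet2E.
  exists (fun m => m = a ⇨ x \/ m = a ⊔ x); split.
  - intros m [-> | ->]; [left; apply open_sub_imp | right; apply join_ubl].
  - apply le_antisym.
    + apply inf_glb; intros m [-> | ->]; [apply le_imp_self | apply join_ubr].
    + apply le_trans with ((a ⇨ x) ⊓ (a ⊔ x)).
      * apply meet_glb; apply inf_lb; auto.
      * eapply le_trans; [apply meet_join_distr |].
        apply join_lub; [apply imp_meet | apply meet_lb2].
Qed.

Lemma open_sub_pseudocompl (a : L) :
  coS_pseudocompl L (open_sub a) (closed_sub L a).
Proof.
  split; [apply closed_sub_sublocale | split; [apply open_closed_cover |]].
  intros U HU Hcov x Hax.
  apply (coS_meet2_absorb (open_sub a) U x HU Hcov).
  intros m Om Hxm; apply (open_ge_top a m Om).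
  eapply le_trans; [exact Hax | exact Hxm].
Qed.

Lemma closed_sub_pseudocompl (a : L) :
  coS_pseudocompl L (closed_sub L a) (open_sub a).
Proof.
  split; [apply open_sub_sublocale |].
  split; [apply coS_meet2_comm, open_closed_cover |].
  intros U HU Hcov y Hy.
  destruct (proj1 (coS_meet2E _ _ _) (Hcov y)) as [M [HM Hyinf]].
  set (s := inf L (fun m => M m /\ U m)).
  replace y with (a ⇨ s).
  { apply (proj2 HU), (proj1 HU); intros m Hm; apply Hm. }
  apply le_antisym.
  - rewrite <- Hy; apply imp_adj.
    rewrite Hyinf; apply inf_glb; intros m Mm.
    destruct (HM m Mm) as [Ham | Um].
    + eapply le_trans; [apply meet_lb2 | exact Ham].
    + eapply le_trans; [apply imp_meet | apply inf_lb; split; assumption].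
  - apply imp_adj; eapply le_trans; [apply meet_lb1 |].
    rewrite Hyinf; apply inf_glb; intros m [Mm _]; apply inf_lb, Mm.
Qed.

Lemma open_sub_in_B (a : L) : in_B_coS L (open_sub a).
Proof.
  split; [apply open_sub_sublocale |].
  exists (closed_sub L a); split; [apply open_sub_pseudocompl | apply closed_sub_pseudocompl].
Qed.

Lemma subfit_meet_inf_joins_le (a x : L) : subfit L ->
  inf L (fun m => exists e, a ⊔ e = ⊤ /\ m = x ⊔ e) ⊓ a ≤ x.
Proof.
  intro Hsf; set (w := inf L _).
  apply NNPP; intro Hwx.
  destruct (Hsf _ _ Hwx) as [c [Hwc Hxc]].
  apply Hxc, top_le; rewrite <- Hwc.
  apply join_lub; [| apply join_ubr].
  eapply le_trans; [apply meet_lb1 |].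
  apply inf_lb; exists c; split; [| reflexivity].
  apply top_le; rewrite <- Hwc.
  apply join_lub; [| apply join_ubr].
  eapply le_trans; [apply meet_lb2 | apply join_ubl].
Qed.

Definition closed_within (S : L -> Prop) : Type :=
  {b : L | forall z, b ≤ z -> S z}.

Definition closed_interior (S : L -> Prop) : L -> Prop :=
  coS_meet L (fun i : closed_within S => closed_sub L (proj1_sig i)).

Lemma closed_interior_sublocale (S : L -> Prop) : sublocale L (closed_interior S).
Proof. apply sublocale_coS_meet; intro i; apply closed_sub_sublocale. Qed.

Lemma closed_interior_sub (S : L -> Prop) (x : L) :
  sublocale L S -> closed_interior S x -> S x.
Proof.
  intros HS [M [HM ->]]; apply (proj1 HS); intros m Mm.
  destruct (HM m Mm) as [[b Hb] Hbm]; exact (Hb m Hbm).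
Qed.

Lemma subfit_cover_closed_interior (T S : L -> Prop) : subfit L ->
  sublocale L T -> sublocale L S -> coS_is_bot L (coS_meet2 L T S) ->
  coS_is_bot L (coS_meet2 L T (closed_interior S)).
Proof.
  intros Hsf HT HS Hcov y.
  set (t := inf L (fun w => T w /\ y ≤ w)).
  assert (Tt : T t) by (apply (proj1 HT); intros m Hm; apply Hm).
  assert (yt : y ≤ t) by (apply inf_glb; intros m Hm; apply Hm).
  assert (closed_in_S : forall e, t ⊔ e = ⊤ -> forall z, y ⊔ e ≤ z -> S z).
  { intros e He z Hz.
    apply (coS_meet2_absorb T S z HS Hcov); intros m Tm Hzm.
    apply top_le; rewrite <- He; apply join_lub.
    - apply inf_lb; split; [exact Tm |].
      eapply le_trans; [apply join_ubl | eapply le_trans; [exact Hz | exact Hzm]].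
    - eapply le_trans; [apply join_ubr | eapply le_trans; [exact Hz | exact Hzm]]. }
  apply coS_meet2E.
  exists (fun m => m = t \/ exists e, t ⊔ e = ⊤ /\ m = y ⊔ e); split.
  - intros m [-> | [e [He ->]]]; [left; exact Tt | right].
    apply (coS_meet_of_mem _ (exist _ (y ⊔ e) (closed_in_S e He))), le_refl.
  - apply le_antisym.
    + apply inf_glb; intros m [-> | [e [_ ->]]]; [exact yt | apply join_ubl].
    + eapply le_trans; [| apply (subfit_meet_inf_joins_le t y Hsf)].
      apply meet_glb.
      * apply inf_glb; intros m Hm; apply inf_lb; right; exact Hm.
      * apply inf_lb; left; reflexivity.
Qed.

Lemma subfit_pseudocompl_closed_interior (T S : L -> Prop) :
  subfit L -> sublocale L T -> coS_pseudocompl L T S ->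
  forall x, S x <-> closed_interior S x.
Proof.
  intros Hsf HT [HS [Hcov Hleast]] x; split.
  - apply (Hleast _ (closed_interior_sublocale S)).
    apply subfit_cover_closed_interior; assumption.
  - apply closed_interior_sub, HS.
Qed.

Lemma open_closed_joins_subfit :
  (forall a : L, exists (I : Type) (f : I -> L),
     forall x, open_sub a x <-> coS_meet L (fun i => closed_sub L (f i)) x) ->
  subfit L.
Proof.
  intros Hopen a b Hab.
  destruct (Hopen a) as [I [f Hf]].
  destruct (proj1 (Hf _) (open_sub_imp a b)) as [M [HM Hinf]].
  destruct (classic (exists m, M m /\ ~ a ≤ m)) as [[m [Mm Ham]] | Hall].
  - destruct (HM m Mm) as [i Hfim]; exists m; split.
    + assert (Hai : a ⊔ f i = ⊤).
      { apply (open_ge_top a); [| apply join_ubl].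
        apply Hf, (coS_meet_of_mem _ i), join_ubr. }
      apply top_le; rewrite <- Hai.
      apply join_lub; [apply join_ubl | eapply le_trans; [exact Hfim | apply join_ubr]].
    + intro Hbm; apply Ham.
      eapply le_trans; [apply le_top | rewrite <- Hbm].
      apply join_lub; [| apply le_refl].
      eapply le_trans; [apply (le_imp_self a) |].
      rewrite Hinf; apply inf_lb, Mm.
  - exfalso; apply Hab.
    assert (Hab' : a ≤ a ⇨ b).
    { rewrite Hinf; apply inf_glb; intros m Mm.
      apply NNPP; intro Ham; apply Hall; exists m; auto. }
    apply imp_adj in Hab'.
    eapply le_trans; [| exact Hab'].
    apply meet_glb; apply le_refl.
Qed.

End Frame.

Theorem lemma4p3 (L : frame) :
  subfit L <->
  (forall S : L -> Prop, in_B_coS L S ->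
     exists (I : Type) (f : I -> L),
       forall x, S x <-> coS_meet L (fun i => closed_sub L (f i)) x).
Proof.
  split.
  - intros Hsf S [_ [T [[HT _] HTS]]].
    exists (closed_within L S), (fun i => proj1_sig i).
    exact (subfit_pseudocompl_closed_interior L T S Hsf HT HTS).
  - intro Hclosed.
    apply open_closed_joins_subfit; intro a.
    apply Hclosed, open_sub_in_B.
Qed.
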